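(* Consider Funding Games with $n$ players and $m$ items under the Highest Ratio Greedy (HRG) mechanism. Let $\mathbf{v}=(v_1,\dots,v_n)$ and $\mathbf{w}=(w_1,\dots,w_n)$ be any two valuation profiles, let $OPT^{\mathbf{v}}=(o_1,\dots,o_n)$ be an allocation maximizing $\sum_i v_i(X_i)$ over all allocations with $\sum_i X_i\le m$, and let $O(\mathbf{v})$ be the strategy profile in which each player $i$ makes the request $o_i^{req}=(o_i, v_i(o_i))$. Then for every strategy profile $\mathbf{s}$ that is valid with respect to both $\mathbf{v}$ and $\mathbf{w}$, $$\sum_{i=1}^n u_i(v_i; o_i^{req}, \mathbf{s}_{-i}) \;\ge\; sw(\mathbf{v}; O(\mathbf{v})) - sw(\mathbf{w}; \mathbf{s}),$$ i.e. the Funding Game is $(1,1)$-smooth with respect to the choice function $O$ and the social welfare objective.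
   Context: A (single-round) Funding Game has players $1,\dots,n$, $m$ identical items, and for each player $i$ a valuation function $v_i:\{0,\dots,m\}\to\mathbb{R}_{\ge 0}$ with $v_i(0)=0$, nondecreasing, and with diminishing marginal returns: $v_i(x)-v_i(x-1)\ge v_i(x+1)-v_i(x)$. A strategy (request) of player $i$ is a pair $(x_i,\tilde v_i)$ with $x_i\in\{0,\dots,m\}$ and reported value $\tilde v_i\ge 0$; it is valid with respect to $v_i$ if $\tilde v_i\le v_i(x_i)$. A strategy profile $\mathbf{s}$ is valid with respect to a valuation profile if every request is valid for the corresponding valuation. The HRG mechanism considers requests in descending order of the ratio $\tilde v_i/x_i$, breaking ties in favor of the player with lower index, and grants to each request in turn $\min(x_i, \text{number of items still available})$ items (requests with $x_i=0$ receive nothing); $X_i(\mathbf{s})$ denotes the number of items player $i$ receives. The payoff is $u_i(v_i;\mathbf{s})=v_i(X_i(\mathbf{s}))$, and for a valuation profile $\mathbf{w}$, $sw(\mathbf{w};\mathbf{s})=\sum_i w_i(X_i(\mathbf{s}))$. $(s_i',\mathbf{s}_{-i})$ denotes $\mathbf{s}$ with player $i$'s strategy replaced by $s_i'$. *)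

From HB Require Import structures.
From mathcomp Require Import all_boot all_order all_algebra.
Set Implicit Arguments. Unset Strict Implicit. Unset Printing Implicit Defensive.
Import Order.TTheory GRing.Theory Num.Theory.
Local Open Scope ring_scope.

(* A valuation on {0..m}: v 0 = 0, nondecreasing, diminishing marginal returns.
   Values outside {0..m} are irrelevant. *)
Definition valuation (R : realFieldType) (m : nat) (v : nat -> R) : Prop :=
  [/\ v 0%N = 0,
      (forall x, (x < m)%N -> v x <= v x.+1) &
      (forall x, (0 < x)%N -> (x < m)%N -> v x.+1 - v x <= v x - v x.-1)].

(* A strategy (request) is a pair (x_i, reported value). *)
Definition strategy (R : realFieldType) := (nat * R)%type.

Definition valid_req (R : realFieldType) (m : nat) (v : nat -> R)
  (r : strategy R) : Prop :=
  [/\ (r.1 <= m)%N, 0 <= r.2 & r.2 <= v r.1].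

Definition valid_profile (R : realFieldType) (n m : nat)
  (v : 'I_n -> nat -> R) (s : 'I_n -> strategy R) : Prop :=
  forall i, valid_req m (v i) (s i).

(* ratio vtilde / x (x = 0 gives 0; such requests receive nothing anyway) *)
Definition ratio (R : realFieldType) (r : strategy R) : R := r.2 / (r.1)%:R.

Definition hrg_before (R : realFieldType) (n : nat) (s : 'I_n -> strategy R)
  (i j : 'I_n) : bool :=
  (ratio (s j) < ratio (s i)) || ((ratio (s i) == ratio (s j)) && (i <= j)%N).

Definition hrg_order (R : realFieldType) (n : nat) (s : 'I_n -> strategy R)
  : seq 'I_n := sort (hrg_before s) (enum 'I_n).

Fixpoint hrg_grant (R : realFieldType) (n : nat) (s : 'I_n -> strategy R)
  (rem : nat) (ord : seq 'I_n) : seq ('I_n * nat) :=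
  match ord with
  | [::] => [::]
  | i :: ord' =>
      let g := minn (s i).1 rem in (i, g) :: hrg_grant s (rem - g) ord'
  end.

Definition hrg_alloc (R : realFieldType) (n m : nat) (s : 'I_n -> strategy R)
  (i : 'I_n) : nat :=
  \sum_(p <- hrg_grant s m (hrg_order s) | p.1 == i) p.2.

Definition social_welfare (R : realFieldType) (n m : nat)
  (w : 'I_n -> nat -> R) (s : 'I_n -> strategy R) : R :=
  \sum_(i < n) w i (hrg_alloc m s i).

Definition replace_strat (R : realFieldType) (n : nat) (s : 'I_n -> strategy R)
  (i : 'I_n) (si : strategy R) : 'I_n -> strategy R :=
  fun j => if j == i then si else s j.

Definition is_opt_alloc (R : realFieldType) (n m : nat)
  (v : 'I_n -> nat -> R) (o : 'I_n -> nat) : Prop :=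
  (\sum_(i < n) o i <= m)%N /\
  forall a : 'I_n -> nat, (\sum_(i < n) a i <= m)%N ->
    \sum_(i < n) v i (a i) <= \sum_(i < n) v i (o i).

Definition opt_profile (R : realFieldType) (n : nat)
  (v : 'I_n -> nat -> R) (o : 'I_n -> nat) : 'I_n -> strategy R :=
  fun i => (o i, v i (o i)).

From Pilot Require Import Defs.
From HB Require Import structures.
From mathcomp Require Import all_boot all_order all_algebra.
From mathcomp Require Import zify ring lra.
Set Implicit Arguments. Unset Strict Implicit. Unset Printing Implicit Defensive.
Import Order.TTheory GRing.Theory Num.Theory.
Local Open Scope ring_scope.

(* Let X'_i be what player i receives when it alone deviates to the truthful
   optimal request (o_i, v_i(o_i)), of ratio r_i = v_i(o_i)/o_i.  Concavity
   gives v_i(X'_i) >= v_i(o_i) - (o_i - X'_i) r_i, so it suffices to bound the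
   weighted shortfall  sum_i (o_i - X'_i) r_i  by  sw(w; s).
   - Mechanism: if player i is short-served, the players served before it
     all have ratio >= r_i and exhausted the supply; since these players form
     an upward-closed set of the priority order, under s they already receive
     at least m - X'_i >= sum_j (o_j - X'_j) items.
   - Charging: taking the deficient player of largest r_i, the weighted
     shortfall is at most sum_j X_j(s) * ratio(s_j), and each term is at most
     w_j(X_j(s)) because s_j is valid for w_j and w_j is concave. *)

Section Grants.
Variables (R : realFieldType) (n : nat) (s : 'I_n -> strategy R).

Lemma grant_players rem ord : map fst (hrg_grant s rem ord) = ord.
Proof. by elim: ord rem => [|a ord IH] rem //=; rewrite IH. Qed.

Lemma grant_total rem ord :
  (\sum_(e <- hrg_grant s rem ord) e.2 = minn rem (\sum_(j <- ord) (s j).1))%N.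
Proof.
elim: ord rem => [|a ord IH] rem /=; first by rewrite !big_nil minn0.
by rewrite !big_cons IH /=; lia.
Qed.

Lemma grant_cat rem p q : hrg_grant s rem (p ++ q) =
  hrg_grant s rem p ++ hrg_grant s (rem - minn rem (\sum_(j <- p) (s j).1)) q.
Proof.
elim: p rem => [|a p IH] rem /=; first by rewrite big_nil minn0 subn0.
rewrite IH big_cons; congr (_ :: _ ++ hrg_grant _ _ _); lia.
Qed.

Lemma grant_notin (i : 'I_n) rem ord : i \notin ord ->
  (\sum_(e <- hrg_grant s rem ord | e.1 == i) e.2 = 0)%N.
Proof.
move=> iN; rewrite big1_seq // => e /andP[/eqP ei eG].
have players := grant_players rem ord.
by move: iN; rewrite -players -ei (map_f fst eG).
Qed.

Lemma grant_at (i : 'I_n) rem p q : i \notin p -> i \notin q ->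
  (\sum_(e <- hrg_grant s rem (p ++ i :: q) | e.1 == i) e.2 =
   minn (s i).1 (rem - minn rem (\sum_(j <- p) (s j).1)))%N.
Proof.
move=> ip iq; rewrite grant_cat big_cat grant_notin //= big_cons eqxx.
by rewrite grant_notin // addn0.
Qed.

End Grants.

Lemma pairwise_upclosed_split (T : eqType) (r : rel T) (P : pred T) (xs : seq T) :
  (forall a b, r a b -> P b -> P a) -> pairwise r xs ->
  xs = filter P xs ++ filter (predC P) xs.
Proof.
move=> up; elim: xs => [|a xs IH] //= /andP[ra_xs /IH {1}->].
case: ifP => Pa //=; rewrite (@eq_in_filter _ P pred0) ?filter_pred0 //.
by move=> b /(allP ra_xs) /up/contraFF; apply.
Qed.

Lemma sum_grants_by_player (n : nat) (P : pred 'I_n) (G : seq ('I_n * nat)) :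
  (\sum_(j | P j) \sum_(e <- G | e.1 == j) e.2 = \sum_(e <- G | P e.1) e.2)%N.
Proof.
rewrite (exchange_big_dep (fun e : 'I_n * nat => P e.1)) => [|j e Pj /eqP -> //] /=.
apply: eq_bigr => e Pe; rewrite (big_pred1 e.1) // => j /=.
by apply/andP/eqP => [[_ /eqP ->] | ->].
Qed.

Section Priority.
Variables (R : realFieldType) (n m : nat) (t : 'I_n -> strategy R).

Lemma hrg_before_trans : transitive (hrg_before t).
Proof.
move=> b a c; rewrite /hrg_before.
move=> /orP[h1|/andP[/eqP e1 l1]] /orP[h2|/andP[/eqP e2 l2]]; apply/orP.
- by left; apply: lt_trans h2 h1.
- by left; rewrite -e2.
- by left; rewrite e1.
- by right; rewrite e1 e2 eqxx (leq_trans l1 l2).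
Qed.

Lemma hrg_before_total : total (hrg_before t).
Proof.
move=> a b; rewrite /hrg_before.
by case: (ltgtP (Defs.ratio (t a)) (Defs.ratio (t b))) => //= _; apply: leq_total.
Qed.

Lemma hrg_before_ratio a b : hrg_before t a b -> Defs.ratio (t b) <= Defs.ratio (t a).
Proof. by case/orP => [/ltW | /andP[/eqP -> _]]. Qed.

Lemma hrg_order_perm : perm_eq (hrg_order t) (enum 'I_n).
Proof. by rewrite /hrg_order perm_sort. Qed.

Lemma hrg_order_uniq : uniq (hrg_order t).
Proof. by rewrite /hrg_order sort_uniq enum_uniq. Qed.

Lemma hrg_order_pairwise : pairwise (hrg_before t) (hrg_order t).
Proof.
rewrite -sorted_pairwise; last exact: hrg_before_trans.
exact: (sort_sorted hrg_before_total).
Qed.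

Lemma hrg_alloc_after_predecessors i : exists p : seq 'I_n,
  [/\ {in p, forall j, hrg_before t j i}, uniq (i :: p) &
      hrg_alloc m t i = minn (t i).1 (m - minn m (\sum_(j <- p) (t j).1))].
Proof.
have i_in : i \in hrg_order t by rewrite /hrg_order mem_sort mem_enum.
move: hrg_order_uniq hrg_order_pairwise; rewrite /hrg_alloc.
case/splitPr: i_in => p q; rewrite cat_uniq pairwise_cat /=.
case/and3P=> p_uniq /norP[ip _] /andP[iq _] /and3P[before_i _ _].
exists p; split; last exact: grant_at.
- by move=> j jp; apply: (allrelP before_i); rewrite ?mem_head.
- by rewrite /= ip.
Qed.

Lemma hrg_alloc_le_request i : (hrg_alloc m t i <= (t i).1)%N.
Proof. by have [p [_ _ ->]] := hrg_alloc_after_predecessors i; apply: geq_minl. Qed.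

Lemma hrg_alloc_full i : (\sum_j (t j).1 <= m)%N -> hrg_alloc m t i = (t i).1.
Proof.
move=> fits; have [p [_ ip_uniq ->]] := hrg_alloc_after_predecessors i.
have: (\sum_(j <- i :: p) (t j).1 <= \sum_j (t j).1)%N.
  by rewrite big_uniq // [leqRHS](bigID (mem (i :: p))) leq_addr.
by rewrite big_cons; lia.
Qed.

Lemma hrg_alloc_upclosed (P : pred 'I_n) :
  (forall a b, hrg_before t a b -> P b -> P a) ->
  (minn m (\sum_(j | P j) (t j).1) <= \sum_(j | P j) hrg_alloc m t j)%N.
Proof.
move=> up; rewrite /hrg_alloc sum_grants_by_player.
rewrite (pairwise_upclosed_split up hrg_order_pairwise) grant_cat big_cat /=.
have -> : (\sum_(j | P j) (t j).1 = \sum_(j <- filter P (hrg_order t)) (t j).1)%N.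
  by rewrite big_filter (perm_big _ hrg_order_perm) big_enum_cond.
rewrite -grant_total; apply: leq_trans (leq_addr _ _).
rewrite big_seq_cond [leqRHS]big_seq_cond; apply/eq_leq/eq_bigl => e /=.
case eG: (e \in _) => //=; symmetry.
by have := map_f fst eG; rewrite grant_players mem_filter => /andP[].
Qed.
End Priority.

Lemma hrg_deviation_shortfall (R : realFieldType) (n m : nat)
    (s : 'I_n -> strategy R) (i : 'I_n) (x : nat) (a : R) :
  (hrg_alloc m (replace_strat s i (x, a)) i < x)%N ->
  (m - hrg_alloc m (replace_strat s i (x, a)) i <=
   \sum_(j | (Defs.ratio (x, a) <= Defs.ratio (s j))%R) hrg_alloc m s j)%N.
Proof.
set s' := replace_strat s i (x, a) => short.
pose P j := Defs.ratio (x, a) <= Defs.ratio (s j).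
have [p [before ip_uniq alloc]] := hrg_alloc_after_predecessors m s' i.
have s'i : s' i = (x, a) by rewrite /s' /replace_strat eqxx.
have in_p j : j \in p -> P j && (s' j == s j).
  move=> jp; have ji : j != i by apply: contraTneq jp => ->; case/andP: ip_uniq.
  have := hrg_before_ratio (before j jp).
  by rewrite /P /s' /replace_strat (negbTE ji) !eqxx andbT.
have demand : (\sum_(j <- p) (s' j).1 <= \sum_(j | P j) (s j).1)%N.
  rewrite (eq_big_seq (fun j => (s j).1)) => [|j /in_p /andP[_ /eqP ->] //].
  move: ip_uniq => /andP[_ p_uniq]; rewrite big_uniq // big_mkcond [leqRHS]big_mkcond.
  by apply: leq_sum => j _; case: ifP => // /in_p /andP[-> _].
have up j k : hrg_before s j k -> P k -> P j.
  by move/hrg_before_ratio; rewrite /P => kj xk; apply: le_trans xk kj.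
have served := @hrg_alloc_upclosed R n m s P up.
move: short demand served; rewrite alloc s'i /=.
move: (\sum_(j <- p) _)%N (\sum_(j | P j) (s j).1)%N (\sum_(j | P j) hrg_alloc m s j)%N.
lia.
Qed.

Section Concavity.
Variables (R : realFieldType) (m : nat) (v : nat -> R) (hv : valuation m v).

Lemma valuation_ge0 x : (x <= m)%N -> 0 <= v x.
Proof.
case: hv => v0 v_incr _; elim: x => [|x IH] x_le; first by rewrite v0.
exact: le_trans (IH (ltnW x_le)) (v_incr _ x_le).
Qed.

Lemma valuation_marginal x : (x < m)%N -> x%:R * (v x.+1 - v x) <= v x.
Proof.
case: hv => v0 _ v_conc; elim: x => [|x IH] x_lt; first by rewrite mul0r v0.
have := IH (ltnW x_lt); have := v_conc x.+1 isT x_lt; rewrite /=.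
have := ler0n R x; rewrite -natr1; nra.
Qed.

Lemma valuation_chord x y : (x <= y)%N -> (y <= m)%N -> x%:R * v y <= y%:R * v x.
Proof.
case: x => [|x]; first by case: hv => v0 _ _; rewrite v0 mul0r mulr0.
elim: y => [|y IH] //; rewrite leq_eqVlt ltnS => /orP[/eqP -> // | x_le] y_lt.
have chord := IH x_le (ltnW y_lt); have marg := valuation_marginal y_lt.
have y_gt0 : 0 < y%:R :> R by rewrite ltr0n (leq_trans _ x_le).
have x_ge0 := ler0n R x.+1.
have gain : x.+1%:R * (v y.+1 - v y) <= v x.+1.
  rewrite -(ler_pM2l y_gt0) mulrCA; apply: le_trans chord.
  by rewrite ler_wpM2l.
rewrite -natr1; nra.
Qed.

End Concavity.

Section Requests.
Variables (R : realFieldType) (m : nat) (v : nat -> R) (hv : valuation m v).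

Lemma ratio_ge0 (r : strategy R) : valid_req m v r -> 0 <= Defs.ratio r.
Proof. by case=> _ r2_ge0 _; rewrite divr_ge0. Qed.

Lemma truthful_req_valid x : (x <= m)%N -> valid_req m v (x, v x).
Proof. by move=> x_le; split=> //=; apply: (valuation_ge0 hv). Qed.

Lemma grant_value (r : strategy R) g :
  valid_req m v r -> (g <= r.1)%N -> g%:R * Defs.ratio r <= v g.
Proof.
case: r => [[|x] a] [/= x_le a_ge0 a_le] g_le.
  by move: g_le; rewrite leqn0 => /eqP ->; rewrite mul0r (valuation_ge0 hv).
have x_gt0 : 0 < x.+1%:R :> R by rewrite ltr0Sn.
apply: le_trans (_ : g%:R * (v x.+1 / x.+1%:R) <= _).
  by rewrite ler_wpM2l // ler_pM2r // invr_gt0.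
by rewrite mulrA ler_pdivrMr // [v g * _]mulrC (valuation_chord hv).
Qed.

Lemma shortfall_loss x o : (x <= o)%N -> (o <= m)%N ->
  v o - (o - x)%:R * Defs.ratio (o, v o) <= v x.
Proof.
case: o => [|o] x_le o_le.
  by move: x_le; rewrite leqn0 => /eqP ->; rewrite mul0r subr0.
have o_gt0 : 0 < o.+1%:R :> R by rewrite ltr0Sn.
have -> : v o.+1 - (o.+1 - x)%:R * Defs.ratio (o.+1, v o.+1)
        = x%:R * v o.+1 / o.+1%:R.
  by rewrite /Defs.ratio natrB //=; field; rewrite addrC natr1 lt0r_neq0.
by rewrite ler_pdivrMr // [v x * _]mulrC (valuation_chord hv).
Qed.

End Requests.

Lemma total_shortfall_le (I : finType) (m : nat) (o x : I -> nat) (i : I) :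
  (\sum_j o j <= m)%N -> (forall j, x j <= o j)%N ->
  (\sum_j (o j - x j) <= m - x i)%N.
Proof.
move=> fits x_le; rewrite (bigD1 i) //= in fits; rewrite (bigD1 i) //=.
have : (\sum_(j | j != i) (o j - x j) <= \sum_(j | j != i) o j)%N.
  by apply: leq_sum => j _; apply: leq_subr.
have := x_le i; lia.
Qed.

Lemma weighted_charging (R : realFieldType) (I J : finType)
    (d r : I -> R) (g rho : J -> R) :
  (forall i, 0 <= d i) -> (forall i, 0 <= r i) ->
  (forall j, 0 <= g j) -> (forall j, 0 <= rho j) ->
  (forall i, d i != 0 -> \sum_i' d i' <= \sum_(j | r i <= rho j) g j) ->
  \sum_i d i * r i <= \sum_j g j * rho j.
Proof.
move=> d_ge0 r_ge0 g_ge0 rho_ge0 covered.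
case: (pickP (fun i => d i != 0)) => [i0 di0 | d_eq0]; last first.
  rewrite big1 => [|i _]; first by apply: sumr_ge0 => j _; rewrite mulr_ge0.
  by move/negbFE/eqP: (d_eq0 i) ->; rewrite mul0r.
(* k carries the largest threshold among the i with d i > 0 *)
case: (@arg_maxP _ _ _ i0 (fun i => d i != 0) r di0) => k dk k_max.
have : \sum_i d i * r i <= (\sum_i d i) * r k.
  rewrite mulr_suml; apply: ler_sum => i _.
  by have [->|/k_max ri_le] := eqVneq (d i) 0; rewrite ?mul0r // ler_wpM2l.
move/le_trans; apply; apply: le_trans (ler_wpM2r (r_ge0 k) (covered k dk)) _.
rewrite mulr_suml [X in X <= _]big_mkcond /=; apply: ler_sum => j _.
by case: ifP => [/ler_wpM2l->|_]; rewrite ?mulr_ge0.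
Qed.

Theorem mainTheorem1 (R : realFieldType) (n m : nat)
  (v w : 'I_n -> nat -> R)
  (hv : forall i, valuation m (v i)) (hw : forall i, valuation m (w i))
  (o : 'I_n -> nat) (hopt : is_opt_alloc m v o)
  (s : 'I_n -> strategy R)
  (hsv : valid_profile m v s) (hsw : valid_profile m w s) :
  \sum_(i < n) v i (hrg_alloc m (replace_strat s i (o i, v i (o i))) i)
  >= social_welfare m v (opt_profile v o) - social_welfare m w s.
Proof.
case: hopt => o_fits _.
have o_le i : (o i <= m)%N by apply: leq_trans o_fits; rewrite (bigD1 i) ?leq_addr.
pose X' i := hrg_alloc m (replace_strat s i (o i, v i (o i))) i.
have X'_le i : (X' i <= o i)%N.
  by have := hrg_alloc_le_request m (replace_strat s i (o i, v i (o i))) i;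
    rewrite /replace_strat eqxx.
have -> : social_welfare m v (opt_profile v o) = \sum_i v i (o i).
  by apply: eq_bigr => i _; rewrite hrg_alloc_full.
apply: le_trans (ler_sum _ (fun i _ => shortfall_loss (hv i) (X'_le i) (o_le i))).
rewrite sumrB lerD2l lerN2.
apply: le_trans (_ : \sum_j (hrg_alloc m s j)%:R * Defs.ratio (s j) <= _); last first.
  by apply: ler_sum => j _; apply: (grant_value (hw j) (hsw j) (hrg_alloc_le_request m s j)).
apply: weighted_charging => [i|i|j|j|i short].
- exact: ler0n.
- exact: ratio_ge0 (truthful_req_valid (hv i) (o_le i)).
- exact: ler0n.
- exact: ratio_ge0 (hsw j).
have X'_lt : (X' i < o i)%N by rewrite ltnNge -subn_eq0; apply: contraNN short => /eqP ->.
apply: le_trans (_ : (m - X' i)%:R <= _); rewrite -natr_sum ler_nat.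
  exact: total_shortfall_le.
exact: hrg_deviation_shortfall.
Qed.
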